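(* Let $G$ be a group and $f:G\to\mathbb{R}$ a nonzero homogeneous quasimorphism. Then there exist a partial order $\preceq$ on $G$ and a bijection $T:G\to G$ such that $(G,\preceq,T)$ is a quasi-total triple, the action of $G$ on itself by left multiplication is an effective, dominating action by automorphisms of $(G,\preceq,T)$ (so the induced order $\leq$ on $G$ is a special quasi-total order), and $f$ is a multiple of a growth function $\gamma_g$ ($g\in G^{++}$) of $\leq$.
   Context: A quasimorphism is $f:G\to\mathbb{R}$ with $\sup_{h,k}|f(hk)-f(h)-f(k)|<\infty$; homogeneous if $f(h^n)=nf(h)$ for $n\in\mathbb{N}$. For a poset $(X,\preceq)$, an order-preserving bijection $T$ is dominant if for all $a,b$ there is $n\in\mathbb{N}$ with $T^na\succ b$. $(X,\preceq,T)$ is a quasi-total triple if $T$ is a dominant order-preserving bijection and there is $N\in\mathbb{N}$ such that for all $a,b$ some $k\in\{0,\dots,N\}$ satisfies $a\preceq T^kb$ or $b\preceq T^ka$. An action of $G$ by automorphisms on $(X,\preceq,T)$ is by order-preserving bijections commuting with $T$; it is dominating if there exist $g\in G,x\in X,n\in\mathbb{N}$ with $g.x\succeq T^n.x$. For an effective action, the induced order on $G$ is $g\leq h\Leftrightarrow\forall k\in G\,\forall x\in X:(kg).x\preceq(kh).x$; an order induced in this way from an effective dominating action on a quasi-total triple is called a special quasi-total order. For a bi-invariant partial order $\leq$ on $G$: $G^+=\{g\geq e\}$, $G^{++}=\{g\in G^+\setminus\{e\}:\forall h\,\exists n\in\mathbb{N}_0,\ g^n\geq h\}$, and for $g\in G^{++}$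 the growth function is $\gamma_g(h)=\lim_{n\to\infty}\frac1n\inf\{p\in\mathbb{Z}: g^p\geq h^n\}$. *)

From Stdlib Require Import Reals ZArith.
From HB Require Import structures.
From mathcomp Require Import ssreflect ssrfun ssrbool eqtype choice ssrnat seq monoid.

Set Implicit Arguments.
Unset Strict Implicit.
Unset Printing Implicit Defensive.

Local Open Scope group_scope.

Definition quasimorphism (G : groupType) (f : G -> R) : Prop :=
  exists D : R, forall h k : G, (Rabs (f ((h * k)%g) - f h - f k) <= D)%R.

Definition homogeneous (G : groupType) (f : G -> R) : Prop :=
  forall (h : G) (n : nat), (0 < n)%N -> f (h ^+ n) = (INR n * f h)%R.

Section Orders.
Variable X : Type.
Variable le : X -> X -> Prop.

Definition partial_order : Prop :=
  (forall a, le a a) /\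
  (forall a b, le a b -> le b a -> a = b) /\
  (forall a b c, le a b -> le b c -> le a c).

Definition sgt (a b : X) : Prop := le b a /\ a <> b.

Definition order_preserving (T : X -> X) : Prop :=
  forall a b, le a b -> le (T a) (T b).

Definition order_preserving_bijection (T : X -> X) : Prop :=
  bijective T /\ order_preserving T.

Definition dominant (T : X -> X) : Prop :=
  forall a b, exists n : nat, (0 < n)%N /\ sgt (iter n T a) b.

Definition quasi_total_triple (T : X -> X) : Prop :=
  partial_order /\ order_preserving_bijection T /\ dominant T /\
  exists N : nat, (0 < N)%N /\
    forall a b, exists k : nat, (k <= N)%N /\
      (le a (iter k T b) \/ le b (iter k T a)).

End Orders.

Section Actions.
Variables (G : groupType) (X : Type).
Variable act : G -> X -> X.

Definition is_action : Prop :=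
  (forall x, act 1%g x = x) /\ (forall g h x, act ((g * h)%g) x = act g (act h x)).

Definition acts_by_automorphisms (le : X -> X -> Prop) (T : X -> X) : Prop :=
  is_action /\
  forall g : G, order_preserving_bijection le (act g) /\
                (forall x, act g (T x) = T (act g x)).

Definition effective : Prop :=
  forall g : G, (forall x, act g x = x) -> g = 1%g.

Definition dominating (le : X -> X -> Prop) (T : X -> X) : Prop :=
  exists (g : G) (x : X) (n : nat), (0 < n)%N /\ le (iter n T x) (act g x).

Definition induced_order (le : X -> X -> Prop) (g h : G) : Prop :=
  forall (k : G) (x : X), le (act ((k * g)%g) x) (act ((k * h)%g) x).

End Actions.

Definition lmul_act (G : groupType) (g x : G) : G := (g * x)%g.

Definition zexpg (G : groupType) (g : G) (p : Z) : G :=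
  if (0 <=? p)%Z then g ^+ Z.to_nat p else (g ^+ Z.to_nat (- p))^-1.

Section Growth.
Variables (G : groupType) (leG : G -> G -> Prop).

Definition Gpp (g : G) : Prop :=
  leG 1%g g /\ g <> 1%g /\ forall h : G, exists n : nat, leG h (g ^+ n).

(* p = inf { p in Z : g^p >= h^n } (an infimum of integers attained = minimum) *)
Definition is_inf_exponent (g h : G) (n : nat) (p : Z) : Prop :=
  leG (h ^+ n) (zexpg g p) /\
  forall q : Z, leG (h ^+ n) (zexpg g q) -> (p <= q)%Z.

Definition growth_value (g h : G) (l : R) : Prop :=
  exists u : nat -> Z,
    (forall n : nat, is_inf_exponent g h n.+1 (u n)) /\
    Un_cv (fun n => (IZR (u n) / INR n.+1)%R) l.

End Growth.

From Stdlib Require Import Reals ZArith Lra Lia Psatz Wf_nat Classical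
  IndefiniteDescription FunctionalExtensionality PropExtensionality.
From HB Require Import structures.
From mathcomp Require Import ssreflect ssrfun ssrbool eqtype choice ssrnat seq monoid.

(* Homogeneous quasimorphisms are conjugation invariant, so x ⪯ y iff x = y or
   f (x^-1 y) >= K, for a threshold K above the defect, is a bi-invariant partial
   order.  Right multiplication by an element t with f t >= K + D is dominant and
   makes this order quasi-total with N = 1.  The least p with h^n ⪯ t^p satisfies
   p f(t) = n f(h) + O(1), hence the growth function of t is f / f(t). *)

Set Implicit Arguments.
Unset Strict Implicit.

Lemma exists_nat_mul_ge (x c : R) :
  (0 < c)%R -> exists n : nat, (0 < n)%N /\ (x <= INR n * c)%R.
Proof.
move=> c_gt0; have [n hn] := INR_unbounded (x / c).
exists n.+1; split => //; rewrite S_INR.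
have -> : x = (x / c * c)%R by field; lra.
apply: Rmult_le_compat_r; lra.
Qed.

Lemma eq0_of_bounded_multiples (a C : R) :
  (forall n : nat, (0 < n)%N -> (Rabs (INR n * a) <= C)%R) -> a = 0%R.
Proof.
move=> bounded; apply: NNPP => a_neq0.
have [n [n_gt0 hn]] := exists_nat_mul_ge (C + 1) (Rabs_pos_lt a a_neq0).
have := bounded n n_gt0.
rewrite Rabs_mult Rabs_pos_eq; [lra | exact: pos_INR].
Qed.

Lemma Z_bounded_below_has_min (Q : Z -> Prop) (p0 : Z) :
  (forall p, Q p -> (p0 <= p)%Z) -> (exists p, Q p) ->
  exists p, Q p /\ forall q, Q q -> (p <= q)%Z.
Proof.
move=> lb [p Qp].
pose P k := Q (p0 + Z.of_nat k)%Z.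
have Q_shift q : Q q -> P (Z.to_nat (q - p0)).
  move=> Qq; rewrite /P Z2Nat.id; last by have := lb q Qq; lia.
  by have -> : (p0 + (q - p0) = q)%Z by lia.
have [k [[Pk k_min] _]] :=
  dec_inh_nat_subset_has_unique_least_element P (fun k => classic (P k))
    (ex_intro _ _ (Q_shift p Qp)).
exists (p0 + Z.of_nat k)%Z; split => // q Qq.
have := k_min _ (Q_shift q Qq); have := lb q Qq; lia.
Qed.

Lemma Un_cv_div_of_bounded_defect (u : nat -> R) (a b C : R) :
  (0 < b)%R -> (forall n, (Rabs (u n * b - INR n.+1 * a) <= C)%R) ->
  Un_cv (fun n => u n / INR n.+1)%R (a / b).
Proof.
move=> b_gt0 defect eps eps_gt0.
have [N [_ hN]] := exists_nat_mul_ge (C + 1) (Rmult_lt_0_compat _ _ eps_gt0 b_gt0).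
exists N => n n_geN; rewrite /Rdist.
have hm : (INR N <= INR n.+1)%R by apply: le_INR; lia.
have m_gt0 : (0 < INR n.+1)%R by apply: lt_0_INR; lia.
have := defect n.
move: hN hm m_gt0; generalize (u n) (INR n.+1) (INR N) => v m N' hN hm m_gt0 hv.
have mb_gt0 : (0 < m * b)%R by apply: Rmult_lt_0_compat.
have -> : (v / m - a / b = (v * b - m * a) / (m * b))%R by field; lra.
apply: (Rmult_lt_reg_r (m * b)) => //.
rewrite -{2}(Rabs_pos_eq (m * b)); last lra.
rewrite -Rabs_mult.
have -> : ((v * b - m * a) / (m * b) * (m * b) = v * b - m * a)%R by field; lra.
have : (N' * (eps * b) <= m * (eps * b))%R by apply: Rmult_le_compat_r; nra.
lra.
Qed.

(* Occurrences of [f x] that agree only up to the hidden group-structure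
   instances are distinct atoms for [lra]; they are identified by conversion. *)
Ltac lra_atoms f :=
  repeat lazymatch goal with
    | H : (_ <= _)%R |- _ => revert H
    | H : (_ < _)%R |- _ => revert H
    | H : @eq R _ _ |- _ => revert H
    end;
  repeat match goal with |- context [f ?x] => let y := fresh "y" in set y := f x end;
  repeat match goal with y := f ?a, z := f ?b |- _ =>
    assert_fails constr_eq y z; change z with y in *; clear z end;
  repeat match goal with y := _ : R |- _ => clearbody y end;
  intros; lra.

Section HomogeneousQuasimorphism.
Local Open Scope group_scope.
Variables (G : groupType) (f : G -> R) (D : R).
Hypothesis defect : forall h k : G, (Rabs (f (h * k) - f h - f k) <= D)%R.
Hypothesis homf : homogeneous f.

Lemma qm_mul_ge h k : (f h + f k - D <= f (h * k))%R.
Proof.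
have := Rle_abs (- (f (h * k) - f h - f k)); rewrite Rabs_Ropp.
have := defect h k; lra_atoms f.
Qed.

Lemma qm_mul_le h k : (f (h * k) <= f h + f k + D)%R.
Proof. have := Rle_abs (f (h * k) - f h - f k); have := defect h k; lra_atoms f. Qed.

Lemma qm_defect_ge0 : (0 <= D)%R.
Proof. exact: Rle_trans (Rabs_pos _) (defect 1 1). Qed.

Lemma hqm1 : f 1 = 0%R.
Proof. have := homf 1 (isT : (0 < 2)%N); rewrite expg1n /=; lra_atoms f. Qed.

Lemma hqmX x n : f (x ^+ n) = (INR n * f x)%R.
Proof. by case: n => [|n]; [rewrite expg0 hqm1 /=; lra | exact: homf]. Qed.

Lemma hqmV x : f x^-1 = (- f x)%R.
Proof.
suff : (f x + f x^-1 = 0)%R by lra_atoms f.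
apply: (@eq0_of_bounded_multiples _ D) => n _.
have := defect (x ^+ n) (x^-1 ^+ n).
rewrite expVgn mulgV hqm1 -expVgn !hqmX -Rabs_Ropp.
by have -> : (- (0 - INR n * f x - INR n * f x^-1) = INR n * (f x + f x^-1))%R by ring.
Qed.

Lemma hqm_conj_near y z : (Rabs (f (y^-1 * (z * y)) - f z) <= 2 * D)%R.
Proof.
have := qm_mul_ge y^-1 (z * y); have := qm_mul_le y^-1 (z * y).
have := qm_mul_ge z y; have := qm_mul_le z y.
rewrite hqmV => *; apply: Rabs_le; lra_atoms f.
Qed.

(* Homogeneous quasimorphisms are conjugation invariant: the bounded error
   [hqm_conj_near] scales linearly under powers. *)
Lemma hqm_conj y z : f (y^-1 * (z * y)) = f z.
Proof.
suff : (f (y^-1 * (z * y)) - f z = 0)%R by lra_atoms f.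
apply: (@eq0_of_bounded_multiples _ (2 * D)) => n _.
have := hqm_conj_near y (z ^+ n).
by rewrite -!conjgE conjXg !hqmX -Rmult_minus_distr_l.
Qed.

Lemma hqmZ x p : f (zexpg x p) = (IZR p * f x)%R.
Proof.
rewrite /zexpg; case: (Z.leb_spec 0 p) => hp.
  by rewrite hqmX INR_IZR_INZ Z2Nat.id.
by rewrite hqmV hqmX INR_IZR_INZ Z2Nat.id ?opp_IZR; [lra | lia].
Qed.

End HomogeneousQuasimorphism.

Lemma induced_order_lmul (G : groupType) (le : G -> G -> Prop) :
  (forall k x g h : G, le g h -> le (k * g * x)%g (k * h * x)%g) ->
  induced_order (@lmul_act G) le = le.
Proof.
move=> le_mul2; apply: functional_extensionality => g.
apply: functional_extensionality => h; apply: propositional_extensionality.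
rewrite /induced_order /lmul_act; split => [/(_ 1%g 1%g)|le_gh k x].
  by rewrite !mul1g !mulg1.
exact: le_mul2.
Qed.

Lemma iter_mulg (G : groupType) (t a : G) n : iter n (fun x => x * t)%g a = (a * t ^+ n)%g.
Proof. by elim: n => [|n IH]; rewrite ?expg0 ?mulg1 // iterS IH expgSr mulgA. Qed.

Definition quasi_le (G : groupType) (f : G -> R) (K : R) (x y : G) : Prop :=
  x = y \/ (K <= f (x^-1 * y)%g)%R.

Section QuasiOrder.
Local Open Scope group_scope.
Variables (G : groupType) (f : G -> R) (D K : R).
Hypothesis defect : forall h k : G, (Rabs (f (h * k) - f h - f k) <= D)%R.
Hypothesis homf : homogeneous f.
Hypothesis defect_lt_K : (D < K)%R.
Local Notation le := (quasi_le f K).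

Lemma quasi_le_partial_order : partial_order le.
Proof.
have D_ge0 := qm_defect_ge0 defect.
split; [|split].
- by move=> a; left.
- move=> a b [->|ab] // [<-|ba] //; move: ba.
  rewrite -[b^-1 * a]invgK invgM invgK (hqmV defect homf); lra_atoms f.
- move=> a b c [->|ab] // [<-|bc]; right => //.
  have := qm_mul_ge defect (a^-1 * b) (b^-1 * c).
  rewrite -mulgA mulVKg; lra_atoms f.
Qed.

Lemma quasi_le_mul2 k x g h : le g h -> le (k * g * x) (k * h * x).
Proof.
case=> [->|gh]; [by left | right].
have -> : (k * g * x)^-1 * (k * h * x) = x^-1 * (g^-1 * h * x).
  by rewrite !invgM !mulgA mulgVK.
by rewrite (hqm_conj defect homf).
Qed.

Lemma lmul_acts_by_automorphisms (T : G -> G) :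
  (forall g x, g * T x = T (g * x)) -> acts_by_automorphisms (@lmul_act G) le T.
Proof.
move=> T_lmul; split.
  by split => [x|g h x]; rewrite /lmul_act ?mul1g ?mulgA.
move=> g; split => [|x]; last exact: T_lmul.
split; first by exists (lmul_act g^-1) => x; rewrite /lmul_act ?mulKg ?mulVKg.
by move=> a b /(quasi_le_mul2 g 1); rewrite !mulg1.
Qed.

Section RightTranslation.
Variable t : G.
Hypothesis t_large : (K + D <= f t)%R.
Local Notation T := (fun x : G => x * t).

Lemma ft_gt0 : (0 < f t)%R.
Proof. have := qm_defect_ge0 defect; lra_atoms f. Qed.

Lemma quasi_le_mulr_bijection : order_preserving_bijection le T.
Proof.
split; first by exists (fun x => x * t^-1) => x; rewrite ?mulgK ?mulgVK.
by move=> a b /(quasi_le_mul2 1 t); rewrite !mul1g.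
Qed.

Lemma quasi_le_large_power a b :
  exists n, (0 < n)%N /\ (K <= f (b^-1 * (a * t ^+ n)))%R.
Proof.
have [n [n_gt0 hn]] := exists_nat_mul_ge (K + D - f (b^-1 * a)) ft_gt0.
exists n; split => //; rewrite mulgA.
have := qm_mul_ge defect (b^-1 * a) (t ^+ n); rewrite (hqmX homf); lra_atoms f.
Qed.

Lemma quasi_le_dominant : dominant le T.
Proof.
move=> a b; have [n [n_gt0 hn]] := quasi_le_large_power a b.
exists n; split => //; rewrite iter_mulg; split; first by right.
move=> e; move: hn; rewrite e mulVg (hqm1 homf).
have := qm_defect_ge0 defect; lra_atoms f.
Qed.

(* Quasi-totality with N = 1: whichever of f (a^-1 b), f (b^-1 a) is nonnegative,
   one more factor t pushes it past K. *)
Lemma quasi_le_quasi_total_triple : quasi_total_triple le T.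
Proof.
split; first exact: quasi_le_partial_order.
split; first exact: quasi_le_mulr_bijection.
split; first exact: quasi_le_dominant.
exists 1%N; split => // a b; exists 1%N; split => //=.
case: (Rle_lt_dec 0 (f (a^-1 * b))) => hab; [left | right]; right; rewrite mulgA.
  by have := qm_mul_ge defect (a^-1 * b) t; lra_atoms f.
have := qm_mul_ge defect (b^-1 * a) t.
rewrite -[b^-1 * a]invgK invgM invgK (hqmV defect homf); lra_atoms f.
Qed.

Lemma quasi_le_Gpp : Gpp le t.
Proof.
have ft_pos := ft_gt0.
split; [|split].
- by right; rewrite invg1 mul1g; have := qm_defect_ge0 defect; lra_atoms f.
- by move=> t1; move: ft_pos; rewrite t1 (hqm1 homf); lra.
- move=> h; have [n [_ hn]] := quasi_le_large_power 1 h.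
  by exists n; right; rewrite mul1g in hn.
Qed.

Section Growth.
Variable h : G.

Lemma quasi_le_pow_lb m p : le (h ^+ m) (zexpg t p) -> (INR m * f h - D <= IZR p * f t)%R.
Proof.
have D_ge0 := qm_defect_ge0 defect.
case=> [e|hk].
  by have := hqmZ defect homf t p; have := hqmX homf h m; rewrite e; lra_atoms f.
have := qm_mul_le defect (h ^+ m)^-1 (zexpg t p).
rewrite (hqmV defect homf) (hqmX homf) (hqmZ defect homf); lra_atoms f.
Qed.

Lemma quasi_le_pow_ub m p :
  (INR m * f h + K + D <= IZR p * f t)%R -> le (h ^+ m) (zexpg t p).
Proof.
move=> hp; right; have := qm_mul_ge defect (h ^+ m)^-1 (zexpg t p).
rewrite (hqmV defect homf) (hqmX homf) (hqmZ defect homf); lra_atoms f.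
Qed.

Lemma quasi_le_inf_exponent_exists m : exists p, is_inf_exponent le t h m p.
Proof.
have [n0 [_ hn0]] := exists_nat_mul_ge (D - INR m * f h) ft_gt0.
apply: (@Z_bounded_below_has_min _ (- Z.of_nat n0)).
  move=> p /quasi_le_pow_lb hp; apply: Znot_gt_le => hlt.
  have : (IZR p <= - INR n0 - 1)%R.
    by rewrite INR_IZR_INZ -opp_IZR -minus_IZR; apply: IZR_le; lia.
  have := ft_gt0; move: hp hn0; generalize (IZR p) (INR n0) (INR m * f h)%R (f t).
  move=> *; nra.
have [n [_ hn]] := exists_nat_mul_ge (INR m * f h + K + D) ft_gt0.
by exists (Z.of_nat n); apply: quasi_le_pow_ub; rewrite -INR_IZR_INZ.
Qed.

Lemma quasi_le_inf_exponent_near m p :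
  is_inf_exponent le t h m p -> (Rabs (IZR p * f t - INR m * f h) <= K + D + f t)%R.
Proof.
move=> [hp p_min].
have lb := quasi_le_pow_lb hp.
have ub : (IZR (p - 1) * f t < INR m * f h + K + D)%R.
  by apply: Rnot_le_lt => /quasi_le_pow_ub /p_min; lia.
rewrite minus_IZR in ub; apply: Rabs_le; have := qm_defect_ge0 defect.
lra_atoms f.
Qed.

Lemma quasi_le_growth : growth_value le t h (f h / f t).
Proof.
have [u u_inf] := functional_choice _ (fun n => quasi_le_inf_exponent_exists n.+1).
exists u; split => //.
apply: (@Un_cv_div_of_bounded_defect _ _ _ (K + D + f t)) => [|n]; first exact: ft_gt0.
exact: quasi_le_inf_exponent_near.
Qed.

End Growth.
End RightTranslation.
End QuasiOrder.

Unset Implicit Arguments.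
Set Strict Implicit.

Theorem proposition1p8 (G : groupType) (f : G -> R)
  (hq : quasimorphism f) (hh : homogeneous f) (hnz : exists g : G, f g <> 0%R) :
  exists (le : G -> G -> Prop) (T : G -> G),
    quasi_total_triple le T /\
    acts_by_automorphisms (@lmul_act G) le T /\
    effective (@lmul_act G) /\
    dominating (@lmul_act G) le T /\
    exists g : G, Gpp (induced_order (@lmul_act G) le) g /\
      exists c : R, forall h : G, exists l : R,
        growth_value (induced_order (@lmul_act G) le) g h l /\ f h = (c * l)%R.
Proof.
have [D defect] := hq.
have D_ge0 := qm_defect_ge0 defect.
have [s fs_gt0] : exists s : G, (0 < f s)%R.
  have [a fa_neq0] := hnz.
  case: (Rlt_le_dec 0 (f a)) => fa; first by exists a.
  by exists a^-1%g; rewrite (hqmV defect hh); lra.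
have [m [_ hm]] := exists_nat_mul_ge (D + 1 + D) fs_gt0.
pose t := (s ^+ m)%g.
have t_large : (D + 1 + D <= f t)%R by rewrite /t (hqmX hh).
have DK : (D < D + 1)%R by lra.
exists (quasi_le f (D + 1)), (fun x => (x * t)%g).
rewrite (induced_order_lmul (@quasi_le_mul2 _ _ _ (D + 1) defect hh)).
split; first exact: quasi_le_quasi_total_triple.
split; first by apply: lmul_acts_by_automorphisms => // g x; rewrite /lmul_act mulgA.
split; first by move=> g /(_ 1%g); rewrite /lmul_act mulg1.
split; first by exists t, 1%g, 1%N; split => //; left; rewrite /lmul_act /= mul1g mulg1.
exists t; split; first exact: quasi_le_Gpp.
exists (f t) => h; exists (f h / f t)%R; split; first exact: quasi_le_growth.
by field; have := ft_gt0 defect DK t_large; lra.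
Qed.
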